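(* Let $n\ge1$, let $f_1,\dots,f_n:\mathbb{R}^d\to\mathbb{R}$ be $L$-smooth (i.e. $\|\nabla f_i(x)-\nabla f_i(y)\|\le L\|x-y\|$ for all $x,y$), $f=\frac1n\sum_i f_i$, $f^\ast:=\inf_x f(x)$ and $\Delta_0:=f(x_0)-f^\ast$. Let $x_0,\dots,x_{T-1}$, $\nabla_0,\dots,\nabla_{T-1}$ and $\gamma_0,\dots,\gamma_{T-1}$ be the iterates, gradient estimators and step-sizes produced by AdaSpider (described in the context) with input $x_0$, $\beta_0>0$, $G_0>0$. Then there is an absolute constant $C>0$ such that \[ \mathbb{E}\Big[\sum_{t=0}^{T-1}\|\nabla_t\|\Big]\le C\Big(\Delta_0\beta_0+G_0+\frac{L}{\beta_0}\log\!\Big(1+nT\Big(\frac{L}{\beta_0G_0}+\frac{\|\nabla f(x_0)\|}{G_0}\Big)\Big)+\beta_0\,\mathbb{E}\Big[\sum_{t=0}^{T-1}\gamma_t\|\nabla f(x_t)-\nabla_t\|^2\Big]\Big)n^{1/4}\sqrt T. \]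
   Context: $\|\cdot\|$ is the Euclidean norm. AdaSpider: input $x_0\in\mathbb{R}^d$, $\beta_0>0$, $G_0>0$, horizon $T\ge1$. For $t=0,1,\dots,T-1$: if $t \bmod n=0$, set $\nabla_t:=\nabla f(x_t)$; otherwise pick $i_t\in\{1,\dots,n\}$ uniformly at random (independently of the past) and set $\nabla_t:=\nabla f_{i_t}(x_t)-\nabla f_{i_t}(x_{t-1})+\nabla_{t-1}$. Then set $\gamma_t:=1\big/\big(n^{1/4}\beta_0\sqrt{n^{1/2}G_0^2+\sum_{s=0}^t\|\nabla_s\|^2}\big)$ and $x_{t+1}:=x_t-\gamma_t\nabla_t$. *)

From HB Require Import structures.
From mathcomp Require Import all_boot all_order all_algebra.
From mathcomp Require Import all_classical all_reals all_analysis.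
Set Implicit Arguments. Unset Strict Implicit. Unset Printing Implicit Defensive.
Import Order.TTheory GRing.Theory Num.Theory.
Import numFieldNormedType.Exports.
Local Open Scope ring_scope.

Section AdaSpider.
Variable R : realType.

Definition dotv (d : nat) (u v : 'rV[R]_d) : R := \sum_(j < d) u 0 j * v 0 j.
Definition enorm (d : nat) (v : 'rV[R]_d) : R := Num.sqrt (dotv v v).

Definition is_gradient (d : nat) (h : 'rV[R]_d -> R) (g : 'rV[R]_d -> 'rV[R]_d) :=
  forall x, differentiable h x /\ forall v, 'd h x v = dotv (g x) v.

Definition avgf (n d : nat) (F : 'I_n -> 'rV[R]_d -> R) (x : 'rV[R]_d) : R :=
  n%:R^-1 * \sum_(i < n) F i x.
Definition avggrad (n d : nat) (G : 'I_n -> 'rV[R]_d -> 'rV[R]_d) (x : 'rV[R]_d)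
  : 'rV[R]_d := n%:R^-1 *: \sum_(i < n) G i x.

Section Alg.
Variables (n d : nat) (G : 'I_n -> 'rV[R]_d -> 'rV[R]_d) (x0 : 'rV[R]_d)
  (beta0 G0 : R) (idx : nat -> 'I_n).

Definition ada_gamma (Ssum : R) : R :=
  (Num.sqrt (Num.sqrt n%:R) * beta0 * Num.sqrt (Num.sqrt n%:R * G0 ^+ 2 + Ssum))^-1.

(* state at time t: (x_t, nabla_t, sum_{s<=t} ||nabla_s||^2);
   idx t is the index i_t sampled at time t (only used when t mod n <> 0). *)
Fixpoint ada_state (t : nat) : 'rV[R]_d * 'rV[R]_d * R :=
  match t with
  | 0 => let g := avggrad G x0 in (x0, g, enorm g ^+ 2)
  | t'.+1 =>
      let: (x, g, Ssum) := ada_state t' in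
      let x' := x - ada_gamma Ssum *: g in
      let g' := if (t'.+1 %% n == 0)%N then avggrad G x'
                else G (idx t'.+1) x' - G (idx t'.+1) x + g in
      (x', g', Ssum + enorm g' ^+ 2)
  end.

Definition ada_x t := (ada_state t).1.1.
Definition ada_nabla t := (ada_state t).1.2.
Definition ada_gam t := ada_gamma (ada_state t).2.
End Alg.

(* The random indices i_0..i_{T-1} as a finite function; extended by a
   default index beyond the horizon (never used). *)
Definition ext_idx (n T : nat) (i0 : 'I_n) (w : {ffun 'I_T -> 'I_n}) (t : nat) : 'I_n :=
  match insub t with Some o => w o | None => i0 end.

(* Expectation with respect to i.i.d. uniform indices = uniform average
   over all index sequences. *)
Definition Exp (n T : nat) (X : {ffun 'I_T -> 'I_n} -> R) : R :=
  (\sum_(w : {ffun 'I_T -> 'I_n}) X w) / #|{ffun 'I_T -> 'I_n}|%:R.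

End AdaSpider.

From HB Require Import structures.
From mathcomp Require Import all_boot all_order all_algebra.
From mathcomp Require Import all_classical all_reals all_analysis.
From mathcomp Require Import ring lra.
Import Order.TTheory GRing.Theory Num.Theory.
Import numFieldNormedType.Exports.
Local Open Scope ring_scope.

(* The bound holds pathwise, for every sequence of sampled indices, and indeed
   for any estimators N_t driving x_(t+1) = x_t - gamma_t N_t with the
   AdaGrad-norm step gamma_t = 1 / (n^(1/4) beta sqrt (D_t)), where
   D_t = D_(-1) + sum_(s <= t) |N_s|^2 and D_(-1) = sqrt n G0^2; the expectation
   is taken only at the end. The descent lemma and 2 <grad f, N> >= |N|^2 - |grad f - N|^2 give
     sum_t gamma_t |N_t|^2 <= 2 Delta0 + sum_t gamma_t |grad f(x_t) - N_t|^2
                              + 2 L sum_t gamma_t^2 |N_t|^2.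
   As gamma_t decreases, the left side is at least gamma_(T-1) (D_(T-1) - D_(-1)),
   while sum_t gamma_t^2 |N_t|^2 = sum_t |N_t|^2 / (sqrt n beta^2 D_t) is at most
   log (D_(T-1) / D_(-1)) / (sqrt n beta^2). Absorbing this logarithm with
   a ln x <= x / 2 + a ln (2 a) turns the inequality into a quadratic one in
   sqrt (D_(T-1)), and Cauchy-Schwarz gives sum_t |N_t| <= sqrt T sqrt (D_(T-1)). *)

Section Euclidean.
Context {R : realType} {d : nat}.
Implicit Types (u v w : 'rV[R]_d) (c : R).

Lemma dotvC u v : dotv u v = dotv v u.
Proof. by apply: eq_bigr => j _; rewrite mulrC. Qed.

Lemma dotvZl c u v : dotv (c *: u) v = c * dotv u v.
Proof. by rewrite /dotv mulr_sumr; apply: eq_bigr => j _; rewrite !mxE mulrA. Qed.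

Lemma dotvZr c u v : dotv u (c *: v) = c * dotv u v.
Proof. by rewrite dotvC dotvZl dotvC. Qed.

Lemma dotvBl u v w : dotv (u - v) w = dotv u w - dotv v w.
Proof. by rewrite /dotv -sumrB; apply: eq_bigr => j _; rewrite !mxE mulrBl. Qed.

Lemma dotv_ge0 v : 0 <= dotv v v.
Proof. by apply: sumr_ge0 => j _; rewrite -expr2 sqr_ge0. Qed.

Lemma enorm_ge0 v : 0 <= enorm v.
Proof. exact: sqrtr_ge0. Qed.

Lemma enorm_sqr v : enorm v ^+ 2 = dotv v v.
Proof. by rewrite sqr_sqrtr // dotv_ge0. Qed.

Lemma enormZ c v : enorm (c *: v) = `|c| * enorm v.
Proof. by rewrite /enorm dotvZl dotvZr mulrA -expr2 sqrtrM ?sqr_ge0 // sqrtr_sqr. Qed.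

Lemma dotv_subZ c u v :
  dotv (u - c *: v) (u - c *: v) = dotv u u - 2 * c * dotv u v + c ^+ 2 * dotv v v.
Proof.
rewrite !dotvBl !dotvZl ![dotv _ (_ - _)]dotvC !dotvBl !dotvZl (dotvC v u); ring.
Qed.

Lemma dotv_self_eq0 u v : dotv u u = 0 -> dotv u v = 0.
Proof.
move=> /eqP; rewrite psumr_eq0 => [/allP u0|j _]; last by rewrite -expr2 sqr_ge0.
rewrite /dotv big1 // => j _.
have /implyP/(_ isT) := u0 j (mem_index_enum _).
by rewrite -expr2 sqrf_eq0 => /eqP ->; rewrite mul0r.
Qed.

Lemma dotv_le_enorm u v : dotv u v <= enorm u * enorm v.
Proof.
have [vpos|vv_le0] := ltP 0 (dotv v v); last first.
  have v0 : dotv v v = 0 by apply/eqP; rewrite eq_le vv_le0 dotv_ge0.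
  by rewrite dotvC dotv_self_eq0 // mulr_ge0 ?enorm_ge0.
have sq : dotv u v ^+ 2 <= dotv u u * dotv v v.
  set p := dotv u v / dotv v v.
  have pv : p * dotv v v = dotv u v by rewrite divfK ?gt_eqF.
  have := dotv_ge0 (u - p *: v); rewrite dotv_subZ => h.
  have := mulr_ge0 h (ltW vpos); nra.
apply: le_trans (ler_norm _) _.
by rewrite -sqrtr_sqr -sqrtrM ?dotv_ge0 // ler_sqrt // mulr_ge0 ?dotv_ge0.
Qed.

Lemma dotv_sqr_lb u v : dotv v v - dotv (u - v) (u - v) <= 2 * dotv u v.
Proof. by have := dotv_subZ 1 u v; rewrite scale1r => ->; have := dotv_ge0 u; lra. Qed.

End Euclidean.

Section Smoothness.
Local Open Scope classical_set_scope.
Context {R : realType} {d : nat}.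
Implicit Types (x v : 'rV[R]_d) (L : R).

Lemma lipschitz_neg_enorm0 {g : 'rV[R]_d -> 'rV[R]_d} {L} :
  (forall x y, enorm (g x - g y) <= L * enorm (x - y)) -> L < 0 -> forall v, enorm v = 0.
Proof.
move=> gL L0 v; have := gL v 0; rewrite subr0 => h.
have := enorm_ge0 (g v - g 0); have := enorm_ge0 v; nra.
Qed.

Lemma is_gradient_derive {F : 'rV[R]_d -> R} {G} x v (r : R) :
  is_gradient F G ->
  is_derive r (1 : R) (fun r => F (x + r *: v)) (dotv (G (x + r *: v)) v).
Proof.
move=> /(_ (x + r *: v)) [dF dFE].
pose phi r := F (x + r *: v).
have quotE : (fun h : R => h^-1 *: ((phi \o shift r) (h *: 1) - phi r))
    = (fun h : R => h^-1 *: ((F \o shift (x + r *: v)) (h *: v) - F (x + r *: v))).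
  by apply/funext => h; rewrite /phi /= -[h *: 1]/(h * 1) mulr1 scalerDl addrCA.
split.
  have : derivable F (x + r *: v) v by exact: diff_derivable.
  by rewrite /derivable -quotE.
by rewrite /derive quotE -/(derive F (x + r *: v) v) deriveE // dFE.
Qed.

Lemma smooth_descent (F : 'rV[R]_d -> R) G L x v :
  is_gradient F G -> 0 <= L ->
  (forall x y, enorm (G x - G y) <= L * enorm (x - y)) ->
  F (x + v) <= F x + dotv (G x) v + L * dotv v v.
Proof.
move=> FG L0 GL.
have dphi (r : R) := is_gradient_derive x v r FG.
have cont : {within `[0, 1], continuous (fun r : R => F (x + r *: v))}.
  by apply: derivable_within_continuous => r _; case: (dphi r).
have [c /andP[c0 c1] + ] := MVT ltr01 (fun r _ => dphi r) cont.
rewrite scale1r scale0r addr0 subr0 mulr1 => mvt.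
have -> : F (x + v) = F x + dotv (G (x + c *: v)) v by rewrite -mvt; ring.
have := GL (x + c *: v) x; rewrite addrAC subrr add0r enormZ => lip.
rewrite -addrA lerD2l -lerBlDl -dotvBl.
apply: le_trans (dotv_le_enorm _ _) _.
rewrite -enorm_sqr expr2 mulrA ler_wpM2r ?enorm_ge0 //; apply: le_trans lip _.
by rewrite ler_wpM2l // ger0_norm ?ler_piMl ?enorm_ge0 // ltW.
Qed.

Lemma avgf_descent n (F : 'I_n -> 'rV[R]_d -> R) G L x v :
  (0 < n)%N -> (forall i, is_gradient (F i) (G i)) -> 0 <= L ->
  (forall i x y, enorm (G i x - G i y) <= L * enorm (x - y)) ->
  avgf F (x + v) <= avgf F x + dotv (avggrad G x) v + L * dotv v v.
Proof.
move=> n_gt0 FG L0 GL.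
have n0 : n%:R != 0 :> R by rewrite pnatr_eq0 -lt0n.
have -> : dotv (avggrad G x) v = n%:R^-1 * \sum_i dotv (G i x) v.
  rewrite dotvZl /dotv; congr (_ * _).
  by under eq_bigr do rewrite summxE mulr_suml; rewrite exchange_big.
have -> : L * dotv v v = n%:R^-1 * \sum_(i < n) L * dotv v v.
  by rewrite sumr_const card_ord -mulr_natr; field.
rewrite /avgf -!mulrDr ler_wpM2l ?invr_ge0 ?ler0n // -!big_split /=.
by apply: ler_sum => i _; apply: smooth_descent.
Qed.

End Smoothness.

Lemma sum_le_sqrt_card_sum_sqr {R : realType} T (a : 'I_T -> R) :
  \sum_(t < T) a t <= Num.sqrt T%:R * Num.sqrt (\sum_(t < T) a t ^+ 2).
Proof.
pose u : 'rV[R]_T := \row_t a t; pose one : 'rV[R]_T := const_mx 1.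
have -> : \sum_t a t = dotv u one by apply: eq_bigr => t _; rewrite !mxE mulr1.
have -> : T%:R = dotv one one.
  by rewrite /dotv (eq_bigr (fun=> 1)) ?sumr_const ?card_ord // => t _; rewrite mxE mulr1.
have -> : \sum_t a t ^+ 2 = dotv u u by apply: eq_bigr => t _; rewrite mxE expr2.
by rewrite mulrC; apply: dotv_le_enorm.
Qed.

Section RealInequalities.
Context {R : realType}.
Implicit Types (a b c e r s x y Z : R).

Lemma ln_sub_ge_div a e : 0 < a -> 0 <= e -> e / (a + e) <= ln (a + e) - ln a.
Proof.
move=> a0 e0; have ae : 0 < a + e by lra.
have gt_m1 : -1 < a / (a + e) - 1 by have := divr_gt0 a0 ae; lra.
have := le_ln1Dx gt_m1; rewrite addrCA subrr addr0 ln_div ?posrE //.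
have -> : a / (a + e) - 1 = - (e / (a + e)) by field; lra.
lra.
Qed.

Lemma sum_div_partial_sum_le_ln c (nu : nat -> R) T :
  0 < c -> (forall t, 0 <= nu t) ->
  \sum_(t < T) nu t / (c + \sum_(i < t.+1) nu i)
    <= ln (c + \sum_(t < T) nu t) - ln c.
Proof.
move=> c0 nu0; elim: T => [|T IH]; first by rewrite !big_ord0 addr0 subrr.
have cS : 0 < c + \sum_(t < T) nu t by rewrite ltr_wpDr ?sumr_ge0.
rewrite big_ord_recr /= (big_ord_recr T) /= addrA.
by have := ln_sub_ge_div _ _ cS (nu0 T); lra.
Qed.

Lemma ln_fenchel a x r : 0 <= a -> 0 < x -> 0 < r ->
  a * ln (x / r) <= x / 2 + a * ln (2 * a / r).
Proof.
move=> a0 x0 r0; have [->|a_neq0] := eqVneq a 0.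
  by rewrite !mul0r addr0 divr_ge0 // ltW.
have a_gt0 : 0 < a by rewrite lt_def a_neq0.
have a2 : 0 < 2 * a by rewrite mulr_gt0.
have lnE : ln (x / r) = ln (x / (2 * a)) + ln (2 * a / r).
  by rewrite !ln_div ?posrE //; ring.
have := ln_sublinear (divr_gt0 x0 a2).
rewrite lnE mulrDr lerD2r => /ltW /(ler_wpM2l (ltW a_gt0)).
suff -> : a * (x / (2 * a)) = x / 2 by [].
by field; rewrite gt_eqF.
Qed.

Lemma ln_le_mul_ln1D m y Z : 0 <= Z -> y <= m%:R * Z -> ln y <= m%:R * ln (1 + Z).
Proof.
move=> Z0 yZ; have lnZ : 0 <= ln (1 + Z) by rewrite ln_ge0 // lerDl.
have [y0|y_gt0] := leP y 0; first by rewrite ln0 // mulr_ge0.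
have bernoulli : 1 + m%:R * Z <= (1 + Z) ^+ m.
  elim: m {yZ} => [|m IH]; first by rewrite mul0r addr0 expr0.
  by rewrite exprS -natr1; have := mulr_ge0 (ler0n R m) Z0; nra.
rewrite mulr_natl -lnXn ?ltr_wpDr // ler_ln ?posrE ?exprn_gt0 ?ltr_wpDr //.
by apply: le_trans bernoulli; lra.
Qed.

Lemma le_of_sqr_subr_le r s b : 0 <= r <= s -> 0 < s ->
  s ^+ 2 - r ^+ 2 <= s * b + s * (s / 2) -> s <= 2 * r + 2 * b.
Proof. by move=> /andP[r0 rs] s0 h; rewrite -(ler_pM2l s0); nra. Qed.

End RealInequalities.

Section AdaptiveStepSize.
Context {R : realType} {d : nat}.
Variables (n : nat) (f : 'rV[R]_d -> R) (g : 'rV[R]_d -> 'rV[R]_d).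
Variables (L fstar beta G0 : R) (X N : nat -> 'rV[R]_d).
Hypotheses (n_gt0 : (0 < n)%N) (L_ge0 : 0 <= L) (beta_gt0 : 0 < beta) (G0_gt0 : 0 < G0).
Hypothesis f_descent : forall x v, f (x + v) <= f x + dotv (g x) v + L * dotv v v.
Hypothesis fstar_le : forall x, fstar <= f x.

Let S t := \sum_(i < t.+1) enorm (N i) ^+ 2.
Let gam t := ada_gamma n beta G0 (S t).
Hypothesis X_step : forall t, X t.+1 = X t - gam t *: N t.

Let q : R := Num.sqrt (Num.sqrt n%:R).
Let D t : R := Num.sqrt n%:R * G0 ^+ 2 + S t.
Let err t := enorm (g (X t) - N t) ^+ 2.

Let sqr_q : q ^+ 2 = Num.sqrt n%:R.
Proof. by rewrite sqr_sqrtr ?sqrtr_ge0. Qed.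

Let q_ge1 : 1 <= q.
Proof. by rewrite -{1}sqrtr1 ler_sqrt ?sqrtr_ge0 // -{1}sqrtr1 ler_sqrt ?ler0n // ler1n. Qed.

Let S_le t k : (t <= k)%N -> S t <= S k.
Proof.
move=> /subnK <-; elim: (k - t)%N => [|m IH] //.
by apply: le_trans IH _; rewrite addSn /S (big_ord_recr (m + t).+1) /= lerDl sqr_ge0.
Qed.

Let S_ge0 t : 0 <= S t.
Proof. by apply: sumr_ge0 => i _; apply: sqr_ge0. Qed.

Let D_gt0 t : 0 < D t.
Proof. by rewrite ltr_wpDr ?S_ge0 // mulr_gt0 ?exprn_gt0 // sqrtr_gt0 ltr0n. Qed.

Let gamE t : gam t = (q * beta * Num.sqrt (D t))^-1.
Proof. by []. Qed.

Let gam_gt0 t : 0 < gam t.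
Proof. by rewrite invr_gt0 !mulr_gt0 ?sqrtr_gt0 ?D_gt0 ?ltr0n. Qed.

Lemma gam_step_descent t :
  gam t * enorm (N t) ^+ 2
    <= 2 * (f (X t) - f (X t.+1)) + gam t * err t + 2 * L * (gam t ^+ 2 * enorm (N t) ^+ 2).
Proof.
have := f_descent (X t) (- gam t *: N t).
rewrite scaleNr -X_step -scaleNr !dotvZr !dotvZl /err !enorm_sqr.
have := ler_wpM2l (ltW (gam_gt0 t)) (dotv_sqr_lb (g (X t)) (N t)).
by have := gam_gt0 t; nra.
Qed.

Lemma sum_gam_descent k :
  \sum_(t < k) gam t * enorm (N t) ^+ 2
    <= 2 * (f (X 0%N) - fstar) + \sum_(t < k) gam t * err t
       + 2 * L * \sum_(t < k) gam t ^+ 2 * enorm (N t) ^+ 2.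
Proof.
have tele : \sum_(t < k) (f (X t) - f (X t.+1)) = f (X 0%N) - f (X k).
  rewrite -(big_mkord xpredT (fun t => f (X t) - f (X t.+1))).
  rewrite (telescope_sumr_eq (fun t => - f (X t))) // => [|t _]; by rewrite opprK addrC.
apply: le_trans (_ : _ <= \sum_(t < k) (2 * (f (X t) - f (X t.+1)) + gam t * err t
                            + 2 * L * (gam t ^+ 2 * enorm (N t) ^+ 2))) _.
  by apply: ler_sum => t _; apply: gam_step_descent.
rewrite !big_split /= -!mulr_sumr tele.
by have := fstar_le (X k); lra.
Qed.

Lemma sum_gam_sqr_le k :
  \sum_(t < k.+1) gam t ^+ 2 * enorm (N t) ^+ 2
    <= (q ^+ 2 * beta ^+ 2)^-1 * (ln (D k) - ln (Num.sqrt n%:R * G0 ^+ 2)).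
Proof.
have c_gt0 : 0 < Num.sqrt n%:R * G0 ^+ 2 by rewrite mulr_gt0 ?exprn_gt0 ?sqrtr_gt0 ?ltr0n.
have qb_gt0 : 0 < q ^+ 2 * beta ^+ 2 by rewrite mulr_gt0 ?exprn_gt0 //; have := q_ge1; lra.
have -> : \sum_(t < k.+1) gam t ^+ 2 * enorm (N t) ^+ 2
    = (q ^+ 2 * beta ^+ 2)^-1 * \sum_(t < k.+1) enorm (N t) ^+ 2 / D t.
  rewrite mulr_sumr; apply: eq_bigr => t _.
  rewrite gamE exprVn !exprMn !sqr_sqrtr ?sqrtr_ge0 ?(ltW (D_gt0 t)) ?dotv_ge0 //.
  by field; rewrite ?gt_eqF ?D_gt0 ?sqrtr_gt0 ?ltr0n.
rewrite ler_wpM2l ?invr_ge0 ?(ltW qb_gt0) //.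
exact: sum_div_partial_sum_le_ln (fun t => enorm (N t) ^+ 2) k.+1 c_gt0 (fun t => sqr_ge0 _).
Qed.

Lemma gam_antitone t k : (t <= k)%N -> gam k <= gam t.
Proof.
have q_gt0 : 0 < q by have := q_ge1; lra.
move=> tk; rewrite !gamE lef_pV2 ?posrE ?mulr_gt0 ?sqrtr_gt0 ?D_gt0 ?ltr0n //.
by rewrite ler_pM2l ?mulr_gt0 // ler_sqrt ?(ltW (D_gt0 _)) // lerD2l S_le.
Qed.

Lemma gam_mul_S_le k : gam k * S k <= \sum_(t < k.+1) gam t * enorm (N t) ^+ 2.
Proof.
rewrite /S mulr_sumr; apply: ler_sum => t _.
by rewrite ler_wpM2r ?sqr_ge0 // gam_antitone // -ltnS.
Qed.

Let E k := \sum_(t < k.+1) gam t * err t.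

Lemma gam_mul_S_le_ln k :
  gam k * S k <= 2 * (f (X 0%N) - fstar) + E k
    + 2 * L * ((q ^+ 2 * beta ^+ 2)^-1 * (ln (D k) - ln (Num.sqrt n%:R * G0 ^+ 2))).
Proof.
apply: le_trans (gam_mul_S_le k) _; apply: le_trans (sum_gam_descent k.+1) _.
by rewrite lerD2l ler_wpM2l ?mulr_ge0 // sum_gam_sqr_le.
Qed.

Lemma sqrt_D_le k Z : L / (beta * G0) <= Z ->
  Num.sqrt (D k) <= 2 * (q * G0)
    + 2 * (q * beta * (2 * (f (X 0%N) - fstar) + E k) + 32 * (L / (q * beta)) * ln (1 + Z)).
Proof.
move=> LZ; set s := Num.sqrt (D k); set r := q * G0.
set P := 2 * (f (X 0%N) - fstar) + E k; pose A := 4 * L / (q * beta).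
have q_gt0 : 0 < q by have := q_ge1; lra.
have s_gt0 : 0 < s by rewrite sqrtr_gt0 D_gt0.
have r_gt0 : 0 < r by rewrite mulr_gt0.
have A_ge0 : 0 <= A by rewrite divr_ge0 ?mulr_ge0 // ltW ?mulr_gt0.
have Z_ge0 : 0 <= Z by apply: le_trans LZ; rewrite divr_ge0 // ltW ?mulr_gt0.
have ss : s ^+ 2 = D k by rewrite sqr_sqrtr // ltW ?D_gt0.
have rr : r ^+ 2 = Num.sqrt n%:R * G0 ^+ 2 by rewrite exprMn sqr_q.
have Sk : S k = s ^+ 2 - r ^+ 2 by rewrite ss rr /D; ring.
have r_le_s : r <= s.
  by rewrite -ler_sqr ?nnegrE ?(ltW r_gt0) ?(ltW s_gt0) // -subr_ge0 -Sk S_ge0.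
have lnE : ln (D k) - ln (Num.sqrt n%:R * G0 ^+ 2) = 2 * ln (s / r).
  by rewrite -ss -rr !lnXn // ln_div ?posrE // mulr_natl mulrnBl.
have key := gam_mul_S_le_ln k; rewrite -/P lnE in key.
have quad : s ^+ 2 - r ^+ 2 <= s * (q * beta * P) + s * (A * ln (s / r)).
  have qbs : 0 < q * beta * s by rewrite !mulr_gt0.
  move: (ler_wpM2l (ltW qbs) key); rewrite gamE -/s -Sk mulrA mulfV ?gt_eqF // mul1r.
  suff -> : q * beta * s * (P + 2 * L * ((q ^+ 2 * beta ^+ 2)^-1 * (2 * ln (s / r))))
          = s * (q * beta * P) + s * (A * ln (s / r)) by [].
  by rewrite /A; field; rewrite ?gt_eqF.
have lnA : ln (2 * A / r) <= 8%:R * ln (1 + Z).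
  apply: ln_le_mul_ln1D => //.
  have -> : 2 * A / r = 8%:R * (L / (beta * G0)) / q ^+ 2.
    by rewrite /A /r; field; rewrite ?gt_eqF.
  rewrite ler_pdivrMr ?exprn_gt0 //; apply: le_trans (_ : _ <= 8%:R * Z) _.
    by rewrite ler_wpM2l.
  by rewrite ler_peMr ?mulr_ge0 // expr_ge1 ?q_ge1 // ltW.
apply: le_of_sqr_subr_le; rewrite ?r_le_s ?(ltW r_gt0) //.
apply: le_trans quad _; rewrite (mulrDr s (q * beta * P)) -addrA lerD2l -mulrDr.
rewrite ler_wpM2l ?(ltW s_gt0) // addrC.
apply: le_trans (ln_fenchel _ _ _ A_ge0 s_gt0 r_gt0) _; rewrite lerD2l.
have -> : 32 * (L / (q * beta)) = A * 8%:R by rewrite /A; field; rewrite ?gt_eqF.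
by rewrite -[A * _ * _]mulrA ler_wpM2l.
Qed.

Lemma sum_enorm_le k Z : L / (beta * G0) <= Z ->
  \sum_(t < k.+1) enorm (N t)
    <= 64 * ((f (X 0%N) - fstar) * beta + G0 + L / beta * ln (1 + Z) + beta * E k)
       * q * Num.sqrt k.+1%:R.
Proof.
move=> LZ; have q_gt0 : 0 < q by have := q_ge1; lra.
have Z_ge0 : 0 <= Z by apply: le_trans LZ; rewrite divr_ge0 // ltW ?mulr_gt0.
have W_ge0 : 0 <= L / beta * ln (1 + Z) by rewrite mulr_ge0 ?divr_ge0 ?ln_ge0 ?lerDl // ltW.
have Delta_ge0 : 0 <= f (X 0%N) - fstar by rewrite subr_ge0.
have E_ge0 : 0 <= E k by rewrite sumr_ge0 // => t _; rewrite mulr_ge0 ?sqr_ge0 // ltW.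
have sqrtS : Num.sqrt (S k) <= Num.sqrt (D k).
  by rewrite ler_sqrt; [rewrite lerDr mulr_ge0 ?sqrtr_ge0 ?sqr_ge0 | exact: ltW].
apply: le_trans (sum_le_sqrt_card_sum_sqr _ (fun t : 'I_k.+1 => enorm (N t))) _.
apply: le_trans (ler_wpM2l (sqrtr_ge0 _) (le_trans sqrtS (sqrt_D_le _ _ LZ))) _.
rewrite mulrC ler_wpM2r ?sqrtr_ge0 //.
have LqW : L / (q * beta) * ln (1 + Z) <= q * (L / beta * ln (1 + Z)).
  have -> : L / (q * beta) * ln (1 + Z) = q^-1 * (L / beta * ln (1 + Z)).
    by field; rewrite ?gt_eqF.
  by rewrite ler_wpM2r //; apply: le_trans q_ge1; rewrite invf_le1 // q_ge1.
have qb_ge0 : 0 <= q * beta by rewrite mulr_ge0 ?ltW.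
have := mulr_ge0 qb_ge0 Delta_ge0; have := mulr_ge0 qb_ge0 E_ge0.
have := mulr_ge0 (ltW q_gt0) (ltW G0_gt0); have := mulr_ge0 (ltW q_gt0) W_ge0.
lra.
Qed.

End AdaptiveStepSize.

Section AdaSpiderRun.
Context {R : realType} {n d : nat}.
Variables (F : 'I_n -> 'rV[R]_d -> R) (G : 'I_n -> 'rV[R]_d -> 'rV[R]_d).
Variables (x0 : 'rV[R]_d) (beta0 G0 : R) (idx : nat -> 'I_n).
Local Notation x := (ada_x G x0 beta0 G0 idx).
Local Notation nabla := (ada_nabla G x0 beta0 G0 idx).
Local Notation gam := (ada_gam G x0 beta0 G0 idx).

Lemma ada_xS t : x t.+1 = x t - gam t *: nabla t.
Proof. by rewrite /ada_x /ada_gam /ada_nabla /=; case: ada_state => [[]]. Qed.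

Lemma ada_gamE t : gam t = ada_gamma n beta0 G0 (\sum_(i < t.+1) enorm (nabla i) ^+ 2).
Proof.
rewrite /ada_gam; congr ada_gamma; elim: t => [|t IH] /=; first by rewrite big_ord1.
rewrite big_ord_recr /= -IH /ada_nabla /=.
by case: ada_state => [[]].
Qed.

Lemma adaspider_sum_enorm_le L fstar Z T :
  (0 < n)%N -> (forall i, is_gradient (F i) (G i)) ->
  (forall i x y, enorm (G i x - G i y) <= L * enorm (x - y)) ->
  (forall y, fstar <= avgf F y) -> 0 < beta0 -> 0 < G0 ->
  (0 <= L -> L / (beta0 * G0) <= Z) -> (L < 0 -> Z <= 0) ->
  \sum_(t < T) enorm (nabla t)
    <= 64 * ((avgf F x0 - fstar) * beta0 + G0 + L / beta0 * ln (1 + Z)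
             + beta0 * \sum_(t < T) gam t * enorm (avggrad G (x t) - nabla t) ^+ 2)
       * Num.sqrt (Num.sqrt n%:R) * Num.sqrt T%:R.
Proof.
move=> n_gt0 FG GL fstar_le b0 G00 LZ Zle.
case: T => [|k]; first by rewrite big_ord0 sqrtr0 mulr0.
have [L_lt0|L_ge0] := ltP L 0.
  have enorm0 := lipschitz_neg_enorm0 (GL (Ordinal n_gt0)) L_lt0.
  rewrite big1 => [|t _]; last exact: enorm0.
  rewrite [X in beta0 * X]big1 => [|t _]; last by rewrite enorm0 expr0n mulr0.
  have W_ge0 : 0 <= L / beta0 * ln (1 + Z).
    by apply: mulr_le0; rewrite ?ln_le0 ?gerDl ?Zle // ler_pdivrMr // mul0r ltW.
  rewrite !mulr_ge0 ?sqrtr_ge0 // mulr0 addr0.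
  apply: addr_ge0 W_ge0; apply: addr_ge0 (ltW G00).
  by rewrite mulr_ge0 ?subr_ge0 // ltW.
under [X in beta0 * X]eq_bigr do rewrite ada_gamE.
apply: (sum_enorm_le n (avgf F) (avggrad G) L fstar beta0 G0 x nabla) => //; last exact: LZ.
- by move=> y v; apply: avgf_descent.
- by move=> t; rewrite ada_xS ada_gamE.
Qed.

End AdaSpiderRun.

Lemma Exp_le_affine {R : realType} n T (X Y : {ffun 'I_T -> 'I_n} -> R) (a b : R) :
  (0 < n)%N -> (forall w, X w <= a + b * Y w) -> Exp X <= a + b * Exp Y.
Proof.
move=> n_gt0 XY; rewrite /Exp.
have card_gt0 : 0 < #|{ffun 'I_T -> 'I_n}|%:R :> R.
  by rewrite ltr0n card_ffun !card_ord expn_gt0 n_gt0.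
rewrite ler_pdivrMr // mulrDl -mulrA divfK ?gt_eqF // mulr_sumr.
apply: le_trans (ler_sum _ (fun w _ => XY w)) _.
by rewrite big_split /= sumr_const mulr_natr.
Qed.

Theorem lemma4 (R : realType) :
  exists C : R, 0 < C /\
  forall (n d T : nat) (hn : (0 < n)%N) (hT : (1 <= T)%N)
    (F : 'I_n -> 'rV[R]_d -> R) (G : 'I_n -> 'rV[R]_d -> 'rV[R]_d) (L : R)
    (x0 : 'rV[R]_d) (beta0 G0 : R),
    (forall i, is_gradient (F i) (G i)) ->
    (forall i x y, enorm (G i x - G i y) <= L * enorm (x - y)) ->
    (exists m : R, forall x, m <= avgf F x) ->
    0 < beta0 -> 0 < G0 ->
    let fstar := inf (range (avgf F)) in
    let Delta0 := avgf F x0 - fstar in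
    let idx w := ext_idx (Ordinal hn) w in
    Exp (fun w : {ffun 'I_T -> 'I_n} =>
           \sum_(t < T) enorm (ada_nabla G x0 beta0 G0 (idx w) t))
    <= C * (Delta0 * beta0 + G0
            + L / beta0 * ln (1 + n%:R * T%:R
                                  * (L / (beta0 * G0) + enorm (avggrad G x0) / G0))
            + beta0 * Exp (fun w : {ffun 'I_T -> 'I_n} =>
                \sum_(t < T) ada_gam G x0 beta0 G0 (idx w) t
                   * enorm (avggrad G (ada_x G x0 beta0 G0 (idx w) t)
                            - ada_nabla G x0 beta0 G0 (idx w) t) ^+ 2))
         * Num.sqrt (Num.sqrt n%:R) * Num.sqrt T%:R.
Proof.
exists 64; split => // n d T n_gt0 T_gt0 F G L x0 beta0 G0 FG GL [m m_le] b0 G00.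
cbv zeta; set fstar := inf (range (avgf F)).
have fstar_le y : fstar <= avgf F y.
  by apply: ge_inf; [exists m => _ [z _ <-] | exists y].
set Z := n%:R * T%:R * _; set Y := (X in beta0 * Exp X).
set q := Num.sqrt (Num.sqrt n%:R); set sT := Num.sqrt T%:R.
set A := (avgf F x0 - fstar) * beta0 + G0 + _.
have -> : 64 * (A + beta0 * Exp Y) * q * sT = 64 * A * q * sT + 64 * beta0 * q * sT * Exp Y.
  by ring.
apply: Exp_le_affine => // w.
have -> : 64 * A * q * sT + 64 * beta0 * q * sT * Y w = 64 * (A + beta0 * Y w) * q * sT.
  by ring.
have nT_ge1 : 1 <= n%:R * T%:R :> R by rewrite -natrM ler1n muln_gt0 n_gt0.
apply: adaspider_sum_enorm_le => // [L_ge0 | L_lt0].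
  apply: le_trans (_ : _ <= n%:R * T%:R * (L / (beta0 * G0))) _.
    by rewrite ler_peMl // divr_ge0 // ltW ?mulr_gt0.
  by rewrite ler_wpM2l ?lerDl ?divr_ge0 ?enorm_ge0 ?(le_trans ler01 nT_ge1) // ltW.
rewrite /Z (lipschitz_neg_enorm0 (GL (Ordinal n_gt0)) L_lt0) mul0r addr0.
by rewrite mulr_ge0_le0 ?(le_trans ler01 nT_ge1) // ler_pdivrMr ?mulr_gt0 // mul0r ltW.
Qed.
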